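(* Assume the KKT set $\Omega^*$ is nonempty and fix an initial point $\omega_0=(X^{(0)},Y^{(0)},V^{(0)})$. Then there exist parameters $(\alpha_k,\beta_k)\in\mathcal{S}$, $k\ge0$, such that the sequence $\{\omega_k\}$ generated by the re-parameterized LADMM iteration (defined in the context) converges to a KKT point of $\min_{X,Y}F(X)+G(Y)$ subject to $X=Y$.
   Context: $F,G:\mathbb{R}^{p\times p}\to\mathbb{R}\cup\{+\infty\}$ are proper, closed, convex. A KKT point is $\omega^*=(X^*,Y^*,V^* )$ with $X^*=Y^*$, $-V^*\in\partial F(X^* )$, $V^*\in\partial G(Y^* )$; $\Omega^*$ is the set of KKT points. $\circ$ is the entrywise (Hadamard) product; for a matrix $a$ with positive entries, $1/a$ and $\sqrt{a}$ are entrywise. $\mathcal{S}:=\{(\alpha,\beta)\in\mathbb{R}^{p\times p}\times\mathbb{R}^{p\times p}: 0<\alpha_{ij}<\beta_{ij}\ \forall i,j\}$. Writing $\omega_k=(X^{(k)},Y^{(k)},V^{(k)})$, the re-parameterized LADMM iteration with parameters $(\alpha_k,\beta_k)$ is \[ \begin{aligned} X^{(k+1)} &= \arg\min_X\Big\{F(X)+\tfrac12\Big\|\tfrac{1}{\sqrt{\alpha_k}}\circ\Big(X - X^{(k)} + \alpha_k\circ\big(V^{(k)}+\tfrac{1}{\beta_k}\circ(X^{(k)}-Y^{(k)})\big)\Big)\Big\|_F^2\Big\},\\ Y^{(k+1)} &= \arg\min_Y\Big\{G(Y)+\tfrac12\Big\|\tfrac{1}{\sqrt{\beta_k}}\circ\big(Y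 - X^{(k+1)} - \beta_k\circ V^{(k)}\big)\Big\|_F^2\Big\},\\ V^{(k+1)} &= V^{(k)} + \tfrac{1}{\beta_k}\circ\big(X^{(k+1)} - Y^{(k+1)}\big). \end{aligned} \] Convergence of triples is in the norm $\|\omega\|_F^2=\|X\|_F^2+\|Y\|_F^2+\|V\|_F^2$. *)

From HB Require Import structures.
From mathcomp Require Import all_boot all_order all_algebra.
From mathcomp Require Import all_classical all_reals all_analysis.
Set Implicit Arguments. Unset Strict Implicit. Unset Printing Implicit Defensive.
Import Order.TTheory GRing.Theory Num.Theory.
Import numFieldNormedType.Exports.
Local Open Scope classical_set_scope.
Local Open Scope ring_scope.

Section Defs.
Variables (R : realType) (p : nat).
Notation M := 'M[R]_p.

Definition frob_inner (A B : M) : R := \sum_(i < p) \sum_(j < p) A i j * B i j.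

Definition frob_norm (A : M) : R := Num.sqrt (\sum_(i < p) \sum_(j < p) (A i j) ^+ 2).

Definition hadamard (a b : M) : M := \matrix_(i, j) (a i j * b i j).

Definition ew_inv (a : M) : M := \matrix_(i, j) (a i j)^-1.

Definition ew_sqrt (a : M) : M := \matrix_(i, j) Num.sqrt (a i j).

Definition proper_fun (F : M -> \bar R) : Prop :=
  (forall X, F X <> -oo%E) /\ (exists X, F X <> +oo%E).

Definition closed_fun (F : M -> \bar R) : Prop := lower_semicontinuous F.

Definition convex_fun (F : M -> \bar R) : Prop :=
  forall (X Y : M) (t : R), 0 < t < 1 ->
    (F (t *: X + (1 - t) *: Y)%R <= t%:E * F X + (1 - t)%R%:E * F Y)%E.

Definition proper_closed_convex (F : M -> \bar R) : Prop :=
  [/\ proper_fun F, closed_fun F & convex_fun F].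

Definition subdiff (F : M -> \bar R) (X V : M) : Prop :=
  F X \is a fin_num /\
  forall Z : M, (F X + (frob_inner V (Z - X))%:E <= F Z)%E.

Definition triple := (M * M * M)%type.
Definition tX (w : triple) : M := w.1.1.
Definition tY (w : triple) : M := w.1.2.
Definition tV (w : triple) : M := w.2.

Definition triple_norm (w : triple) : R :=
  Num.sqrt (frob_norm (tX w) ^+ 2 + frob_norm (tY w) ^+ 2 + frob_norm (tV w) ^+ 2).

Definition triple_sub (w w' : triple) : triple :=
  (tX w - tX w', tY w - tY w', tV w - tV w').

Definition KKT (F G : M -> \bar R) (w : triple) : Prop :=
  [/\ tX w = tY w, subdiff F (tX w) (- tV w) & subdiff G (tY w) (tV w)].

Definition in_S (a b : M) : Prop := forall i j, 0 < a i j < b i j.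

Definition is_argmin (phi : M -> \bar R) (X : M) : Prop :=
  forall X' : M, (phi X <= phi X')%E.

Definition ladmm_X_obj (F : M -> \bar R) (a b : M) (w : triple) (X : M) : \bar R :=
  (F X + (2^-1 * frob_norm (hadamard (ew_inv (ew_sqrt a))
     (X - tX w + hadamard a (tV w + hadamard (ew_inv b) (tX w - tY w)))) ^+ 2)%:E)%E.

Definition ladmm_Y_obj (G : M -> \bar R) (b : M) (w : triple) (Xn : M) (Y : M) : \bar R :=
  (G Y + (2^-1 * frob_norm (hadamard (ew_inv (ew_sqrt b))
     (Y - Xn - hadamard b (tV w))) ^+ 2)%:E)%E.

Definition ladmm_step (F G : M -> \bar R) (a b : M) (w w' : triple) : Prop :=
  [/\ is_argmin (ladmm_X_obj F a b w) (tX w'),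
      is_argmin (ladmm_Y_obj G b w (tX w')) (tY w') &
      tV w' = tV w + hadamard (ew_inv b) (tX w' - tY w')].

Definition ladmm_seq (F G : M -> \bar R) (alpha beta : nat -> M) (w0 : triple)
    (omega : nat -> triple) : Prop :=
  omega 0%N = w0 /\ forall k, ladmm_step F G (alpha k) (beta k) (omega k) (omega k.+1).

End Defs.

(* With the constant parameters alpha = 1 and beta = 4, both partial minimisations
   are proximal steps.  A closed proper convex function with a subgradient is bounded
   below by an affine function, so the proximal objectives are lower semicontinuous
   and coercive and attain their minima: the iteration is well defined.  The
   optimality conditions of the two steps and the monotonicity of the subdifferentials
   give, relative to any KKT point (xs, xs, vs), the Fejer inequality
     E(k+1) + D(k) <= E(k),
   E(k) = 3/4 |x_k - xs|^2 + 4 |v_k - vs|^2 + 1/4 |y_k - xs|^2, D(k) the same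
   weighted sum of the squared increments.  Hence the iterates are bounded and their
   increments vanish; a cluster point is a KKT point because the graphs of the
   subdifferentials of closed functions are closed, and since the energy relative to
   this KKT point is nonincreasing and tends to 0 along a subsequence, the whole
   sequence converges to it. *)

From mathcomp Require Import all_boot all_order all_algebra.
From mathcomp Require Import all_classical all_reals all_analysis.
From mathcomp Require Import ring lra.
Import Order.TTheory GRing.Theory Num.Theory.
Import numFieldNormedType.Exports.
Local Open Scope classical_set_scope.
Local Open Scope ring_scope.

Set Implicit Arguments.
Unset Strict Implicit.
Unset Printing Implicit Defensive.

Notation "''[' A , B ]" := (frob_inner A B) (format "''[' A ,  B ]").
Notation "''[' A ]" := (frob_inner A A) (format "''[' A ]").

Lemma entry_le_mx_norm (R : realDomainType) (m n : nat) (A : 'M[R]_(m, n)) i j :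
  `|A i j| <= `|A|.
Proof. by rewrite [`|A|]/Num.norm /= mx_normrE (le_bigmax _ _ (i, j)). Qed.

Section DoubleSum.
Variables (R : realType) (p : nat).

Lemma eq_double_sum (f g : 'I_p -> 'I_p -> R) : (forall i j, f i j = g i j) ->
  \sum_(i < p) \sum_(j < p) f i j = \sum_(i < p) \sum_(j < p) g i j.
Proof. by move=> fg; apply: eq_bigr => i _; apply: eq_bigr => j _. Qed.

Lemma double_sumD (f g : 'I_p -> 'I_p -> R) :
  \sum_(i < p) \sum_(j < p) f i j + \sum_(i < p) \sum_(j < p) g i j =
  \sum_(i < p) \sum_(j < p) (f i j + g i j).
Proof. by rewrite -big_split; apply: eq_bigr => i _; rewrite -big_split. Qed.

Lemma double_sumN (f : 'I_p -> 'I_p -> R) :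
  - \sum_(i < p) \sum_(j < p) f i j = \sum_(i < p) \sum_(j < p) - f i j.
Proof. by rewrite -sumrN; apply: eq_bigr => i _; rewrite -sumrN. Qed.

Lemma double_sumZ (c : R) (f : 'I_p -> 'I_p -> R) :
  c * \sum_(i < p) \sum_(j < p) f i j = \sum_(i < p) \sum_(j < p) c * f i j.
Proof. by rewrite mulr_sumr; apply: eq_bigr => i _; rewrite mulr_sumr. Qed.

End DoubleSum.

(* Proves an identity between real linear combinations of Frobenius inner
   products by reducing it to the corresponding identity between entries. *)
Ltac frob_ring := rewrite /frob_inner;
  repeat rewrite ?double_sumZ ?double_sumN ?double_sumD;
  apply: eq_double_sum => i j; rewrite ?mxE; (ring || (field; done)).

Section FrobeniusInner.
Variables (R : realType) (p : nat).
Implicit Types A B : 'M[R]_p.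

Lemma frob_norm_sqr A : frob_norm A ^+ 2 = '[A].
Proof.
rewrite /frob_norm sqr_sqrtr; last by do 2!(apply: sumr_ge0 => ? _); exact: sqr_ge0.
by apply: eq_double_sum => i j; rewrite expr2.
Qed.

Lemma frob_inner_ge0 A : 0 <= '[A].
Proof. by do 2!(apply: sumr_ge0 => ? _); rewrite -expr2 sqr_ge0. Qed.

Lemma frob_inner0 : '[0 : 'M[R]_p] = 0.
Proof. by rewrite /frob_inner big1 // => i _; rewrite big1 // => j _; rewrite mxE mulr0. Qed.

Lemma entry_sqr_le_frob A i j : A i j ^+ 2 <= '[A].
Proof.
rewrite /frob_inner (bigD1 i) //= (bigD1 j) //= -expr2 -addrA lerDl.
apply: addr_ge0; first by apply: sumr_ge0 => j' _; rewrite -expr2 sqr_ge0.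
by do 2!(apply: sumr_ge0 => ? _); rewrite -expr2 sqr_ge0.
Qed.

Lemma mx_norm_sqr_le_frob A : `|A| ^+ 2 <= '[A].
Proof.
rewrite [`|A|]/Num.norm /=.
have [->|/mx_norm_neq0 [[i j] ->]] := eqVneq (mx_norm A) 0.
  by rewrite expr0n frob_inner_ge0.
by rewrite real_normK ?num_real // entry_sqr_le_frob.
Qed.

Lemma mx_norm_le_frob A : `|A| <= 1 + '[A].
Proof. by have := mx_norm_sqr_le_frob A; have := normr_ge0 A; nra. Qed.

(* One iteration with alpha = 1, beta = 4: u is the subgradient of F at x1 given by
   the X-step and v1 the updated multiplier. *)
Lemma fejer_identity (x y v x1 y1 xs vs : 'M[R]_p) :
  let v1 := v + 4^-1 *: (x1 - y1) in
  let u := (x - x1) - v - 4^-1 *: (x - y) in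
  (3/4 * '[x - xs] + 4 * '[v - vs] + 4^-1 * '[y - xs])
  - (3/4 * '[x1 - xs] + 4 * '[v1 - vs] + 4^-1 * '[y1 - xs])
  - (3/4 * '[x - x1] + 4 * '[v1 - v] + 4^-1 * '[y1 - y])
  = 2 * ('[u + vs, x1 - xs] + '[v1 - vs, y1 - xs] + '[v1 - v, y1 - y]).
Proof. frob_ring. Qed.

End FrobeniusInner.

Lemma increasing_seq_ge (f : nat -> nat) : increasing_seq f -> forall n, (n <= f n)%N.
Proof.
move=> /increasing_seqP incr_f; elim=> // n IHn.
by apply: leq_ltn_trans IHn _; have := incr_f n; rewrite ltEnat.
Qed.

Lemma increasing_seq_comp (f g : nat -> nat) :
  increasing_seq f -> increasing_seq g -> increasing_seq (f \o g).
Proof. by move=> incr_f incr_g m n /=; rewrite incr_f; exact: incr_g. Qed.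

Lemma cvg_subseq {T : topologicalType} (u : nat -> T) (l : T) (f : nat -> nat) :
  increasing_seq f -> u @ \oo --> l -> (u \o f) @ \oo --> l.
Proof.
move=> incr_f ul A /ul [N _ uA]; exists N => // n /= Nn; apply: uA => /=.
by apply: (@leq_trans n) => //; exact: increasing_seq_ge.
Qed.

Lemma nonincreasing_cvg_subseq {R : realType} (u : nat -> R) (l : R) (f : nat -> nat) :
  nonincreasing_seq u -> has_lbound (range u) -> increasing_seq f ->
  (u \o f) @ \oo --> l -> u @ \oo --> l.
Proof.
move=> noninc_u lb_u incr_f ufl.
have u_cvg := nonincreasing_cvgn noninc_u lb_u.
suff <- : inf (range u) = l by [].
exact: (cvg_unique _ (cvg_subseq incr_f u_cvg) ufl).
Qed.

Lemma bolzano_weierstrass_fin {R : realType} (T : finType) (u : T -> nat -> R) :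
  (forall t, exists M, forall n, `|u t n| <= M) ->
  exists2 f : nat -> nat, increasing_seq f & forall t, cvgn (u t \o f).
Proof.
move=> u_bd.
suff [f incr_f fP] : exists2 f : nat -> nat, increasing_seq f &
    forall t, t \in enum T -> cvgn (u t \o f).
  by exists f => // t; apply: fP; rewrite mem_enum.
elim: (enum T) => [|t s [f incr_f fP]]; first by exists id.
have [M ut_bd] := u_bd t.
have ut_bounded : bounded_fun (u t \o f).
  rewrite /bounded_near; near=> K => n _ /=.
  by apply: le_trans (ut_bd (f n)) _; near: K; apply: nbhs_pinfty_ge; exact: num_real.
have [g incr_g cvg_g] := bolzano_weierstrass ut_bounded.
exists (f \o g); first exact: increasing_seq_comp.
move=> t'; rewrite inE => /orP[/eqP -> //|t's].
have /cvg_ex [l ul] := fP t' t's.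
by apply/cvg_ex; exists l; exact: (cvg_subseq (u := u t' \o f)).
Unshelve. all: end_near. Qed.

Lemma cvg_mx_entryP {K : numFieldType} {T : Type} (F : set_system T) {FF : Filter F}
    (m n : nat) (u : T -> 'M[K]_(m, n)) (L : 'M[K]_(m, n)) :
  u @ F --> L <-> forall i j, (fun t => u t i j) @ F --> L i j.
Proof.
split=> [uL i j | uL].
  exact: cvg_comp uL (@coord_continuous K m n i j L).
apply/cvg_mx_entourageP => A entA.
apply: filter_forall => i; apply: filter_forall => j.
have uij := (@cvg_entourageP _ _ (fmap_filter _ FF) (L i j)).1 (uL i j) A entA.
exact: (@filterS _ F FF _ _ (fun t => @mem_set _ _ _) uij).
Qed.

Lemma mx_bolzano_weierstrass {R : realType} (m n : nat) (u : nat -> 'M[R]_(m, n)) :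
  (exists M, forall k, `|u k| <= M) ->
  exists2 f : nat -> nat, increasing_seq f & cvgn (u \o f).
Proof.
move=> [M u_bd].
have [f incr_f cvg_f] :=
  @bolzano_weierstrass_fin R _ (fun ij : 'I_m * 'I_n => fun k => u k ij.1 ij.2)
    (fun ij => ex_intro _ M (fun k => le_trans (entry_le_mx_norm _ _ _) (u_bd k))).
exists f => //; apply/cvg_ex; exists (\matrix_(i, j) limn (fun k => u (f k) i j)).
by apply/cvg_mx_entryP => i j; rewrite mxE; exact: (cvg_f (i, j)).
Qed.

Lemma cvg_frob_inner {R : realType} {T : Type} (F : set_system T) {FF : Filter F}
    (p : nat) (A B : T -> 'M[R]_p) (LA LB : 'M[R]_p) :
  A @ F --> LA -> B @ F --> LB -> (fun t => '[A t, B t]) @ F --> '[LA, LB].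
Proof.
move=> /cvg_mx_entryP AL /cvg_mx_entryP BL.
apply: (cvg_big add_continuous) => i _; apply: (cvg_big add_continuous) => j _.
exact: cvgM.
Qed.

Lemma cvg_frob_dist0 {R : realType} {T : Type} (F : set_system T) {FF : Filter F}
    (p : nat) (A : T -> 'M[R]_p) (L : 'M[R]_p) :
  A @ F --> L -> (fun t => '[A t - L]) @ F --> 0.
Proof.
move=> AL; rewrite -(frob_inner0 R p) -(subrr L).
by apply: cvg_frob_inner; apply: cvgB => //; exact: cvg_cst.
Qed.

Lemma sqr_le_cvg0 {R : realType} (a b : nat -> R) (c : R) :
  (forall k, a k ^+ 2 <= c * b k) -> b @ \oo --> 0 -> a @ \oo --> 0.
Proof.
move=> ab b0; apply/cvgrPdist_lt => e e0.
have cb0 : (fun k => c * b k) @ \oo --> 0 by rewrite -(mulr0 c); apply: cvgMr.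
near=> k; rewrite sub0r normrN.
have cbk : c * b k < e ^+ 2 by near: k; apply: (cvgr_lt 0 cb0); rewrite exprn_gt0.
rewrite -(ltr_pXn2r (n := 2)) ?nnegrE //; last exact: ltW.
by rewrite real_normK ?num_real //; apply: le_lt_trans cbk.
Unshelve. all: end_near. Qed.

Lemma frob_le_cvg0 {R : realType} (p : nat) (A : nat -> 'M[R]_p) (b : nat -> R) (c : R) :
  (forall k, '[A k] <= c * b k) -> b @ \oo --> 0 -> A @ \oo --> (0 : 'M[R]_p).
Proof.
move=> Ab b0; apply/norm_cvg0P; apply: (sqr_le_cvg0 _ b0) => k.
exact: le_trans (mx_norm_sqr_le_frob _) (Ab k).
Qed.

Lemma ler_of_vanishing_slack {R : realFieldType} (a b K : R) : 0 <= K ->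
  (forall t, 0 < t < 1 -> a <= b + t * K) -> a <= b.
Proof.
move=> K0 abK; apply/ler_addgt0Pr => e e0.
pose t := e / (2 * e + K).
have eK : 0 < 2 * e + K by lra.
have t0 : 0 < t by rewrite divr_gt0.
have t1 : t < 1 by rewrite ltr_pdivrMr //; lra.
apply: le_trans (abK t _) _; first by rewrite t0 t1.
rewrite lerD2l /t mulrAC ler_pdivrMr //; nra.
Qed.

Section LowerSemicontinuity.
Context {T : topologicalType} {R : realFieldType}.
Implicit Types f : T -> \bar R.

Lemma lower_semicontinuous_cvg_le f (u : nat -> T) (x : T) (b : nat -> R) (l : R) :
  lower_semicontinuous f -> u @ \oo --> x -> (forall n, (f (u n) <= (b n)%:E)%E) ->
  b @ \oo --> l -> (f x <= l%:E)%E.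
Proof.
move=> lsc_f ux fub bl; rewrite leNgt; apply/negP => lfx.
have [a la afx] : exists2 a, l < a & (a%:E < f x)%E.
  move: lfx; case: (f x) => [r| |] //=.
  - by rewrite lte_fin => lr; exists ((l + r) / 2); rewrite ?lte_fin; lra.
  - by move=> _; exists (l + 1); [lra | exact: ltry].
have [V Vx Vf] := lsc_f x a afx.
have uV : \forall n \near \oo, V (u n) := ux V Vx.
have [n [/Vf afun bna]] := filter_ex (filterI uV (cvgr_lt l bl a la)).
by have := lt_le_trans afun (fub n); rewrite lte_fin; lra.
Qed.

Lemma lower_semicontinuousD_continuous f (g : T -> R) :
  lower_semicontinuous f -> continuous g ->
  lower_semicontinuous (fun x => f x + (g x)%:E)%E.
Proof.
move=> lsc_f cont_g x a afgx.
have [e e0 efx] : exists2 e, 0 < e & ((a - g x + e)%:E < f x)%E.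
  move: afgx; case: (f x) => [r| |] //= afgx.
  - by exists ((r + g x - a) / 2); rewrite -?EFinD ?lte_fin in afgx *; lra.
  - by exists 1; [exact: ltr01 | exact: ltry].
have [V Vx Vf] := lsc_f x _ efx.
exists (V `&` [set y | `|g x - g y| < e]).
  by apply: filterI => //; move/cvgrPdist_lt: (cont_g x); apply.
move=> y [/Vf]; case: (f y) => [r| |] //= agr gxy; last exact: ltry.
rewrite -EFinD lte_fin; rewrite lte_fin in agr.
by move: gxy; rewrite ltr_norml; lra.
Qed.

End LowerSemicontinuity.

Section Subdifferential.
Variables (R : realType) (p : nat).
Notation M := 'M[R]_p.
Implicit Types (F : M -> \bar R) (A B X Z U : M).

Lemma subdiff_neqNy F X U Z : subdiff F X U -> F Z != -oo%E.
Proof.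
by case=> fin_FX /(_ Z); rewrite -(fineK fin_FX) -EFinD; case: (F Z).
Qed.

Lemma subdiff_monotone F A B U V :
  subdiff F A U -> subdiff F B V -> 0 <= '[U - V, A - B].
Proof.
move=> [fin_FA /(_ B) FAB] [fin_FB /(_ A) FBA].
move: FAB FBA; rewrite -(fineK fin_FA) -(fineK fin_FB) -!EFinD !lee_fin.
have -> : '[U - V, A - B] = - ('[U, B - A] + '[V, A - B]) by frob_ring.
lra.
Qed.

Lemma subdiff_closed F (X U : nat -> M) (Xlim Ulim : M) :
  lower_semicontinuous F -> (forall n, subdiff F (X n) (U n)) ->
  X @ \oo --> Xlim -> U @ \oo --> Ulim -> subdiff F Xlim Ulim.
Proof.
move=> lsc_F sub_XU XL UL.
have le_F Z r : F Z = r%:E -> (F Xlim <= (r - '[Ulim, Z - Xlim])%:E)%E.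
  move=> FZ; apply: (lower_semicontinuous_cvg_le (b := fun n => r - '[U n, Z - X n]) lsc_F XL).
    move=> n; have [fin_FXn /(_ Z)] := sub_XU n.
    by rewrite FZ -(fineK fin_FXn) -EFinD !lee_fin; lra.
  by apply: cvgB; [exact: cvg_cst | apply: cvg_frob_inner => //; apply: cvgB => //; exact: cvg_cst].
have FZ_neqNy Z : F Z != -oo%E by exact: subdiff_neqNy (sub_XU 0%N).
have fin_FXlim : F Xlim \is a fin_num.
  rewrite fin_numE FZ_neqNy /=; have [fin_FX0 _] := sub_XU 0%N.
  move: (le_F (X 0%N) _ (esym (fineK fin_FX0))).
  by case: (F Xlim).
split=> // Z; move: (FZ_neqNy Z) (le_F Z).
case: (F Z) => [r _ /(_ r erefl)| |] //; last by rewrite leey.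
by rewrite -(fineK fin_FXlim) -EFinD !lee_fin; lra.
Qed.

End Subdifferential.

Section Proximal.
Variables (R : realType) (p : nat).
Notation M := 'M[R]_p.
Implicit Types (F phi : M -> \bar R) (A B C X Y Z : M).

Lemma lsc_coercive_argmin phi (C : M) (L c : R) :
  lower_semicontinuous phi -> 0 < c ->
  (forall Y, ((L + c * '[Y - C])%:E <= phi Y)%E) -> (exists Y, phi Y != +oo%E) ->
  exists X, is_argmin phi X.
Proof.
move=> lsc_phi c0 minor [Y0 phiY0].
have minor_fin Y r : phi Y = r%:E -> L + c * '[Y - C] <= r.
  by move=> phiY; have := minor Y; rewrite phiY lee_fin.
have phi_neqNy Y : phi Y != -oo%E by have := minor Y; case: (phi Y).
pose S := [set r : R | exists Y, phi Y = r%:E].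
have lb_S : has_lbound S.
  exists L => r [Y /minor_fin LY]; apply: le_trans LY; rewrite lerDl.
  by rewrite mulr_ge0 ?frob_inner_ge0 ?ltW.
have inf_S : has_inf S.
  split=> //; move: phiY0 (phi_neqNy Y0); case phiY: (phi Y0) => [r| |] // _ _.
  by exists r, Y0.
have min_seq n : exists Yr : M * R, phi Yr.1 = Yr.2%:E /\ Yr.2 < inf S + n.+1%:R^-1.
  have n0 : 0 < n.+1%:R^-1 :> R by rewrite invr_gt0 ltr0n.
  have [r [Y phiY] rm] := inf_adherent n0 inf_S.
  by exists (Y, r).
have [Yr Yr_min] := choice min_seq.
pose Y n := (Yr n).1.
have Y_bd n : `|Y n| <= `|C| + (1 + (inf S + 1 - L) / c).
  have -> : Y n = (Y n - C) + C by rewrite subrK.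
  rewrite addrC; apply: le_trans (ler_normD _ _) _; rewrite lerD2l.
  apply: le_trans (mx_norm_le_frob _) _; rewrite lerD2l ler_pdivlMr //.
  rewrite mulrC; have [/minor_fin LY rm] := Yr_min n.
  have rm1 : (Yr n).2 < inf S + 1.
    by apply: lt_le_trans rm _; rewrite lerD2l invf_le1 ?ltr0n // ler1n.
  by rewrite /Y; lra.
have [f incr_f /cvg_ex [Xlim YXlim]] := mx_bolzano_weierstrass (ex_intro _ _ Y_bd).
exists Xlim => X'.
have phi_le_inf : (phi Xlim <= (inf S)%:E)%E.
  apply: (lower_semicontinuous_cvg_le (b := fun n => inf S + (f n).+1%:R^-1) lsc_phi YXlim).
    by move=> n /=; have [-> /ltW] := Yr_min (f n); rewrite lee_fin.
  rewrite -[X in _ --> X]addr0; apply: cvgD; first exact: cvg_cst.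
  exact: (cvg_subseq incr_f (@cvg_harmonic R)).
apply: le_trans phi_le_inf _; move: (phi_neqNy X').
case phiX': (phi X') => [r| |] // _; last by rewrite leey.
by rewrite lee_fin; apply: (ge_inf lb_S); exists X'.
Qed.

Lemma frob_inner_young (A B : M) (k : R) : 0 < k ->
  - (k^-1 * '[A] + k / 4 * '[B]) <= '[A, B].
Proof.
move=> k0; have k_neq0 : k != 0 by rewrite gt_eqF.
have : 0 <= k * '[k^-1 *: A + 2^-1 *: B] by rewrite mulr_ge0 ?frob_inner_ge0 ?ltW.
have -> : k * '[k^-1 *: A + 2^-1 *: B] = k^-1 * '[A] + '[A, B] + k / 4 * '[B].
  by frob_ring.
lra.
Qed.

Definition prox_objective F (k : R) C X : \bar R := (F X + (k / 2 * '[X - C])%:E)%E.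

(* The subgradient inequality at Z bounds F below by an affine function, which the
   quadratic term dominates. *)
Lemma prox_objective_minorant F (k : R) C Z G :
  subdiff F Z G -> 0 < k ->
  exists L, forall Y, ((L + k / 4 * '[Y - C])%:E <= prox_objective F k C Y)%E.
Proof.
move=> [fin_FZ subgrad] k0.
exists (fine (F Z) + '[G, C - Z] - k^-1 * '[G]) => Y.
rewrite /prox_objective; move: (subgrad Y); rewrite -(fineK fin_FZ) -EFinD.
case: (F Y) => [r| |]; [|by rewrite addye ?leey|by rewrite leeNy_eq].
rewrite -EFinD !lee_fin.
have -> : '[G, Y - Z] = '[G, C - Z] + '[G, Y - C] by frob_ring.
have := frob_inner_young G (Y - C) k0.
have : 0 <= k / 4 * '[Y - C] by rewrite mulr_ge0 ?divr_ge0 ?frob_inner_ge0 ?ltW.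
lra.
Qed.

Lemma prox_argmin_exists F (k : R) C Z G :
  lower_semicontinuous F -> subdiff F Z G -> 0 < k ->
  exists X, is_argmin (prox_objective F k C) X.
Proof.
move=> lsc_F sub_FZ k0; have [L minor] := prox_objective_minorant C sub_FZ k0.
have cont_quad : continuous (fun X => k / 2 * '[X - C]).
  move=> X; have FX := nbhs_filter X.
  apply: cvgM; first exact: cvg_cst.
  by apply: cvg_frob_inner; apply: cvgB => //; exact: cvg_cst.
apply: (lsc_coercive_argmin (C := C) (c := k / 4) _ _ minor).
- exact: lower_semicontinuousD_continuous lsc_F cont_quad.
- by rewrite divr_gt0.
- exists Z; rewrite /prox_objective; case: sub_FZ.
  by case: (F Z).
Qed.

Lemma prox_subdiff F (k : R) C X :
  proper_fun F -> convex_fun F -> 0 < k ->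
  is_argmin (prox_objective F k C) X -> subdiff F X (k *: (C - X)).
Proof.
move=> [FNy [X0 FX0]] cvx_F k0 min_X.
have fin_FX : F X \is a fin_num.
  rewrite fin_numE; apply/andP; split; apply/eqP; first exact: FNy.
  move=> FXy; move: (min_X X0) FX0 (FNy X0); rewrite /prox_objective FXy addye //.
  by case: (F X0).
pose x := fine (F X); split=> // Z.
case FZ: (F Z) => [z| |]; [|by rewrite leey|by have := FNy Z].
rewrite -(fineK fin_FX) -EFinD lee_fin -/x.
apply: (@ler_of_vanishing_slack _ _ _ (k / 2 * '[Z - X])).
  by rewrite mulr_ge0 ?divr_ge0 ?frob_inner_ge0 ?ltW.
move=> t /andP[t0 t1]; pose W := t *: Z + (1 - t) *: X.
have cvx_W : (F W <= (t * z + (1 - t) * x)%:E)%E.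
  by move: (cvx_F Z X t); rewrite t0 t1 FZ -(fineK fin_FX) -!EFinM -EFinD; apply.
have := le_trans (min_X W) (leeD2r _ cvx_W).
rewrite /prox_objective -(fineK fin_FX) -/x -!EFinD lee_fin.
have -> : '[W - C] = '[X - C] + 2 * t * '[X - C, Z - X] + t ^+ 2 * '[Z - X] by frob_ring.
have -> : '[k *: (C - X), Z - X] = - k * '[X - C, Z - X] by frob_ring.
move=> min_cvx; rewrite -(ler_pM2l t0); nra.
Qed.

End Proximal.

Section LadmmStep.
Variables (R : realType) (p : nat).
Notation M := 'M[R]_p.
Notation alpha := (const_mx 1 : M).
Notation beta := (const_mx 4 : M).
Implicit Types (F G : M -> \bar R) (w : triple R p).

Let quarter_gt0 : 0 < 4^-1 :> R.
Proof. by rewrite invr_gt0. Qed.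

Definition ladmm_X_center w : M := tX w - (tV w + 4^-1 *: (tX w - tY w)).

Lemma ladmm_X_objE F w : ladmm_X_obj F alpha beta w = prox_objective F 1 (ladmm_X_center w).
Proof.
apply/funext => X; rewrite /ladmm_X_obj /prox_objective frob_norm_sqr.
congr (_ + _%:E)%E; rewrite /frob_inner !double_sumZ; apply: eq_double_sum => i j.
by rewrite !mxE sqrtr1 invr1; field.
Qed.

Lemma ladmm_Y_objE G w Xn :
  ladmm_Y_obj G beta w Xn = prox_objective G 4^-1 (Xn + 4 *: tV w).
Proof.
have sqrt4 : Num.sqrt 4 = 2 :> R.
  have -> : 4 = 2 ^+ 2 :> R by rewrite expr2 -natrM.
  by rewrite sqrtr_sqr ger0_norm.
apply/funext => Y; rewrite /ladmm_Y_obj /prox_objective frob_norm_sqr.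
congr (_ + _%:E)%E; rewrite /frob_inner !double_sumZ; apply: eq_double_sum => i j.
by rewrite !mxE sqrt4; field.
Qed.

Lemma ladmm_step_exists F G Z U Z' U' :
  lower_semicontinuous F -> subdiff F Z U -> lower_semicontinuous G -> subdiff G Z' U' ->
  forall w, exists w', ladmm_step F G alpha beta w w'.
Proof.
move=> lsc_F sub_F lsc_G sub_G w.
have [X min_X] := prox_argmin_exists (ladmm_X_center w) lsc_F sub_F ltr01.
have [Y min_Y] := prox_argmin_exists (X + 4 *: tV w) lsc_G sub_G quarter_gt0.
exists (X, Y, tV w + hadamard (ew_inv beta) (X - Y)).
by split=> //=; rewrite ?ladmm_X_objE ?ladmm_Y_objE.
Qed.

Lemma ladmm_step_subdiff F G w w' :
  proper_fun F -> convex_fun F -> proper_fun G -> convex_fun G ->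
  ladmm_step F G alpha beta w w' ->
  [/\ subdiff F (tX w') (tX w - tX w' - tV w - 4^-1 *: (tX w - tY w)),
      subdiff G (tY w') (tV w') & tV w' = tV w + 4^-1 *: (tX w' - tY w')].
Proof.
move=> pF cF pG cG [min_X min_Y V_upd].
have V_upd' : tV w' = tV w + 4^-1 *: (tX w' - tY w').
  by rewrite V_upd; apply/matrixP => i j; rewrite !mxE.
split=> //.
- rewrite ladmm_X_objE in min_X; have := prox_subdiff pF cF ltr01 min_X.
  congr subdiff; apply/matrixP => i j; rewrite !mxE; ring.
- rewrite ladmm_Y_objE in min_Y; have := prox_subdiff pG cG quarter_gt0 min_Y.
  congr subdiff; rewrite V_upd'.
  by apply/matrixP => i j; rewrite !mxE; field.
Qed.

End LadmmStep.

(* x, y, v are the iterates from index 1 on, so that v k is a subgradient of G at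
   y k for every k, including k = 0. *)
Section LadmmConvergence.
Variables (R : realType) (p : nat) (F G : 'M[R]_p -> \bar R) (x y v : nat -> 'M[R]_p).
Hypotheses (lsc_F : lower_semicontinuous F) (lsc_G : lower_semicontinuous G).
Hypothesis subdiff_F_x :
  forall k, subdiff F (x k.+1) (x k - x k.+1 - v k - 4^-1 *: (x k - y k)).
Hypothesis subdiff_G_y : forall k, subdiff G (y k) (v k).
Hypothesis v_update : forall k, v k.+1 = v k + 4^-1 *: (x k.+1 - y k.+1).

Definition energy (xs vs : 'M[R]_p) k :=
  3/4 * '[x k - xs] + 4 * '[v k - vs] + 4^-1 * '[y k - xs].

Definition step_energy k :=
  3/4 * '[x k - x k.+1] + 4 * '[v k.+1 - v k] + 4^-1 * '[y k.+1 - y k].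

Lemma energy_ge0 xs vs k : 0 <= energy xs vs k.
Proof.
rewrite /energy; have := frob_inner_ge0 (x k - xs); have := frob_inner_ge0 (v k - vs).
have := frob_inner_ge0 (y k - xs); lra.
Qed.

Lemma step_energy_ge0 k : 0 <= step_energy k.
Proof.
rewrite /step_energy; have := frob_inner_ge0 (x k - x k.+1).
have := frob_inner_ge0 (v k.+1 - v k); have := frob_inner_ge0 (y k.+1 - y k); lra.
Qed.

Section Fejer.
Variables (xs vs : 'M[R]_p).
Hypotheses (subdiff_F_xs : subdiff F xs (- vs)) (subdiff_G_xs : subdiff G xs vs).

Lemma energy_fejer k : energy xs vs k.+1 + step_energy k <= energy xs vs k.
Proof.
rewrite -subr_ge0 opprD addrA.
have := fejer_identity (x k) (y k) (v k) (x k.+1) (y k.+1) xs vs.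
rewrite /= -v_update /energy /step_energy => ->.
apply: mulr_ge0 => //; apply: addr_ge0; first apply: addr_ge0.
- by have := subdiff_monotone (subdiff_F_x k) subdiff_F_xs; rewrite opprK.
- exact: subdiff_monotone (subdiff_G_y k.+1) subdiff_G_xs.
- exact: subdiff_monotone (subdiff_G_y k.+1) (subdiff_G_y k).
Qed.

Lemma energy_nonincreasing : nonincreasing_seq (energy xs vs).
Proof.
apply/nonincreasing_seqP => k; have := energy_fejer k; have := step_energy_ge0 k; lra.
Qed.

Lemma step_energy_cvg0 : step_energy @ \oo --> 0.
Proof.
have lb_energy : has_lbound (range (energy xs vs)).
  by exists 0 => _ [k _ <-]; exact: energy_ge0.
have energy_cvg := nonincreasing_cvgn energy_nonincreasing lb_energy.
apply: (@squeeze_cvgr _ _ _ _ (fun=> 0) (fun k => energy xs vs k - energy xs vs k.+1)).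
- near=> k; rewrite step_energy_ge0 /=; have := energy_fejer k; lra.
- exact: cvg_cst.
- rewrite -(subrr (inf (range (energy xs vs)))); apply: cvgB => //.
  by rewrite (cvg_shiftS (energy xs vs)).
Unshelve. all: end_near. Qed.

Lemma increments_cvg0 :
  [/\ (fun k => x k - x k.+1) @ \oo --> (0 : 'M[R]_p),
       (fun k => v k.+1 - v k) @ \oo --> (0 : 'M[R]_p) &
       (fun k => y k.+1 - y k) @ \oo --> (0 : 'M[R]_p)].
Proof.
have step_ge k := (frob_inner_ge0 (x k - x k.+1), frob_inner_ge0 (v k.+1 - v k),
  frob_inner_ge0 (y k.+1 - y k)).
split; [apply: (frob_le_cvg0 (c := 4/3)) | apply: (frob_le_cvg0 (c := 4^-1)) |
        apply: (frob_le_cvg0 (c := 4))]; try exact: step_energy_cvg0;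
  by move=> k; have [[? ?] ?] := step_ge k; rewrite /step_energy; lra.
Qed.

Lemma iterates_bounded : exists2 Mx, (forall k, `|x k| <= Mx) &
  exists Mv, forall k, `|v k| <= Mv.
Proof.
have energy_le k : energy xs vs k <= energy xs vs 0.
  exact: energy_nonincreasing.
have frob_le (A B : 'M[R]_p) c : 0 < c -> c * '[A - B] <= energy xs vs 0 ->
    `|A| <= `|B| + (1 + energy xs vs 0 / c).
  move=> c0 cAB; have -> : A = (A - B) + B by rewrite subrK.
  rewrite addrC; apply: le_trans (ler_normD _ _) _; rewrite lerD2l.
  by apply: le_trans (mx_norm_le_frob _) _; rewrite lerD2l ler_pdivlMr // mulrC.
exists (`|xs| + (1 + energy xs vs 0 / (3/4))) => [k|].
  apply: frob_le => //; apply: le_trans (energy_le k); rewrite /energy.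
  have := frob_inner_ge0 (v k - vs); have := frob_inner_ge0 (y k - xs); lra.
exists (`|vs| + (1 + energy xs vs 0 / 4)) => k.
apply: frob_le => //; apply: le_trans (energy_le k); rewrite /energy.
have := frob_inner_ge0 (x k - xs); have := frob_inner_ge0 (y k - xs); lra.
Qed.

Lemma cluster_point_subdiff (f : nat -> nat) (xb vb : 'M[R]_p) : increasing_seq f ->
  (fun n => x (f n).+1) @ \oo --> xb -> (fun n => v (f n).+1) @ \oo --> vb ->
  [/\ (fun n => y (f n).+1) @ \oo --> xb, subdiff F xb (- vb) & subdiff G xb vb].
Proof.
move=> incr_f xf vf; have [dx0 dv0 dy0] := increments_cvg0.
have dxf := cvg_subseq incr_f dx0; have dvf := cvg_subseq incr_f dv0.
have dyf := cvg_subseq incr_f dy0.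
have yf : (fun n => y (f n).+1) @ \oo --> xb.
  have -> : (fun n => y (f n).+1) = (fun n => x (f n).+1 - 4 *: (v (f n).+1 - v (f n))).
    by apply/funext => n; rewrite v_update; apply/matrixP => i j; rewrite !mxE; field.
  by have := cvgB xf (cvgZ (cvg_cst (4 : R)) dvf); rewrite scaler0 subr0; apply.
have uf : (fun n => x (f n) - x (f n).+1 - v (f n) - 4^-1 *: (x (f n) - y (f n)))
    @ \oo --> 0 + 0 - 4^-1 *: (0 + 4 *: 0 + 0) - vb.
  have -> : (fun n => x (f n) - x (f n).+1 - v (f n) - 4^-1 *: (x (f n) - y (f n))) =
    (fun n => (x (f n) - x (f n).+1) + (v (f n).+1 - v (f n)) - 4^-1 *: ((x (f n) - x (f n).+1)
       + 4 *: (v (f n).+1 - v (f n)) + (y (f n).+1 - y (f n))) - v (f n).+1).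
    by apply/funext => n; rewrite v_update; apply/matrixP => i j; rewrite !mxE; field.
  exact: cvgB (cvgB (cvgD dxf dvf)
    (cvgZ (cvg_cst _) (cvgD (cvgD dxf (cvgZ (cvg_cst _) dvf)) dyf))) vf.
rewrite !(scaler0, addr0, subr0, oppr0, add0r) in uf; split=> //.
- exact: (subdiff_closed lsc_F (fun n => subdiff_F_x (f n)) xf uf).
- exact: (subdiff_closed lsc_G (fun n => subdiff_G_y (f n).+1) yf vf).
Qed.

Lemma cluster_point_kkt : exists xb vb, [/\ subdiff F xb (- vb), subdiff G xb vb &
  exists2 f, increasing_seq f & (fun n => energy xb vb (f n)) @ \oo --> 0].
Proof.
have [Mx x_bd [Mv v_bd]] := iterates_bounded.
have [f1 incr_f1 /cvg_ex [xb x_cvg]] :=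
  mx_bolzano_weierstrass (ex_intro _ Mx (fun k => x_bd k.+1)).
have [f2 incr_f2 /cvg_ex [vb vf]] :=
  mx_bolzano_weierstrass (ex_intro _ Mv (fun n => v_bd (f1 n).+1)).
pose f := f1 \o f2; have incr_f : increasing_seq f by exact: increasing_seq_comp.
have xf : (fun n => x (f n).+1) @ \oo --> xb by exact: (cvg_subseq incr_f2 x_cvg).
have [yf sub_F sub_G] := cluster_point_subdiff incr_f xf vf.
exists xb, vb; split => //; exists (fun n => (f n).+1).
  apply/increasing_seqP => n; move/increasing_seqP: incr_f => /(_ n).
  by rewrite !ltEnat /= ltnS.
have := cvgD (cvgD (cvgM (cvg_cst (3/4 : R)) (cvg_frob_dist0 xf))
  (cvgM (cvg_cst (4 : R)) (cvg_frob_dist0 vf))) (cvgM (cvg_cst (4^-1 : R)) (cvg_frob_dist0 yf)).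
by rewrite !mulr0 !addr0; apply.
Qed.

End Fejer.

Lemma energy_cvg0_at_kkt xs vs : subdiff F xs (- vs) -> subdiff G xs vs ->
  exists xb vb, [/\ subdiff F xb (- vb), subdiff G xb vb & energy xb vb @ \oo --> 0].
Proof.
move=> sub_F_xs sub_G_xs.
have [xb [vb [sub_F sub_G [f incr_f energy_f]]]] := cluster_point_kkt sub_F_xs sub_G_xs.
exists xb, vb; split=> //.
apply: nonincreasing_cvg_subseq incr_f energy_f; first exact: energy_nonincreasing.
by exists 0 => _ [k _ <-]; exact: energy_ge0.
Qed.

End LadmmConvergence.

Lemma triple_norm_sqr (R : realType) (p : nat) (w : triple R p) :
  triple_norm w ^+ 2 = '[tX w] + '[tY w] + '[tV w].
Proof.
rewrite /triple_norm !frob_norm_sqr sqr_sqrtr //.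
by apply: addr_ge0; [apply: addr_ge0|]; exact: frob_inner_ge0.
Qed.

Unset Implicit Arguments.

Theorem theorem2 (R : realType) (p : nat) (F G : 'M[R]_p -> \bar R)
    (HF : proper_closed_convex F) (HG : proper_closed_convex G)
    (Hne : exists w : triple R p, KKT F G w)
    (w0 : triple R p) :
  exists alpha beta : nat -> 'M[R]_p,
    (forall k, in_S (alpha k) (beta k)) /\
    (exists omega : nat -> triple R p, ladmm_seq F G alpha beta w0 omega) /\
    (forall omega : nat -> triple R p, ladmm_seq F G alpha beta w0 omega ->
       exists wstar : triple R p,
         KKT F G wstar /\
         (fun k => triple_norm (triple_sub (omega k) wstar)) @ \oo --> (0 : R)).
Proof.
case: HF => pF lF cF; case: HG => pG lG cG; case: Hne => ws [wsXY sub_F sub_G].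
rewrite -wsXY in sub_G.
exists (fun=> const_mx 1), (fun=> const_mx 4); split.
  by move=> k i j; rewrite !mxE; lra.
split.
  have [next next_step] := choice (ladmm_step_exists lF sub_F lG sub_G).
  by exists (fun k => iter k next w0); split=> // k; exact: next_step.
move=> omega [_ steps]; have step k := ladmm_step_subdiff pF cF pG cG (steps k).
pose x k := tX (omega k.+1); pose y k := tY (omega k.+1); pose v k := tV (omega k.+1).
have [sub_F_x sub_G_y v_update] : [/\
    forall k, subdiff F (x k.+1) (x k - x k.+1 - v k - 4^-1 *: (x k - y k)),
    forall k, subdiff G (y k) (v k) &
    forall k, v k.+1 = v k + 4^-1 *: (x k.+1 - y k.+1)].
  by split=> k; [case: (step k.+1) | case: (step k) | case: (step k.+1)].
have [xb [vb [sub_F_xb sub_G_xb energy0]]] :=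
  energy_cvg0_at_kkt lF lG sub_F_x sub_G_y v_update sub_F sub_G.
exists (xb, xb, vb); split; first by split.
rewrite -(cvg_shiftS (fun k => triple_norm _)).
apply: (sqr_le_cvg0 (c := 4) _ energy0) => k /=.
rewrite triple_norm_sqr /energy /triple_sub /=.
have := frob_inner_ge0 (x k - xb); have := frob_inner_ge0 (y k - xb).
have := frob_inner_ge0 (v k - vb); rewrite /x /y /v; lra.
Qed.
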